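(* Every nonzero element $a$ of a finite additive poset $A$ can be written as a sum of pairwise independent atoms of $A$. Moreover, in any such expansion of $a$, all the atoms lie in the tail $A_a$ of $a$.
   Context: An additive poset is a pair $(A,\le)$ where $A$ is an abelian group and $\le$ is a partial order on $A$ such that for all $a,b,c\in A$: $(\ast)$ if $b\le a$ and $c\le a$ then $b+c\le a$; $(\ast\ast)$ if $a\le b$ and $a\le c$ then $a\le a+b+c$. The tail of $a$ is $A_a=\{x:x\le a\}$. Elements $x,y$ are independent if $x\le x+y$. An atom is a nonzero $x$ with $A_x=\{0,x\}$. *)

From HB Require Import structures.
From mathcomp Require Import all_boot all_order all_algebra.
Set Implicit Arguments. Unset Strict Implicit. Unset Printing Implicit Defensive.
Import GRing.Theory.
Local Open Scope ring_scope.

Definition additive_poset (A : zmodType) (le : rel A) : Prop :=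
  [/\ reflexive le, antisymmetric le, transitive le,
      (forall a b c : A, le b a -> le c a -> le (b + c) a) &
      (forall a b c : A, le a b -> le a c -> le a (a + b + c))].

Definition tail (A : finZmodType) (le : rel A) (a : A) : {set A} :=
  [set x | le x a].

Definition independent (A : zmodType) (le : rel A) (x y : A) : Prop :=
  le x (x + y).

Definition atom (A : finZmodType) (le : rel A) (x : A) : Prop :=
  x != 0 /\ tail le x = [set 0; x].

Definition atomic_expansion (A : finZmodType) (le : rel A) (a : A)
    (S : {set A}) : Prop :=
  [/\ (forall x, x \in S -> atom le x),
      (forall x y, x \in S -> y \in S -> x != y -> independent le x y) &
      \sum_(x in S) x = a].

From mathcomp Require Import all_boot all_order all_algebra all_fingroup.
Set Implicit Arguments.
Import GRing.Theory.
Local Open Scope ring_scope.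

(* The axioms make every tail A_a a subgroup of A (in a finite group, -b is a
   positive multiple of b).  An atom x then satisfies 2x = 0, and for such x the
   elements independent of x are closed under addition; hence every atom of an
   expansion of a lies below a.  For existence, take an atom x <= a (a nonzero
   element of minimal tail below a); the tail of a - x is strictly smaller than
   that of a, and every atom below a - x is independent of x, so an expansion of
   a - x extends to one of a by adding x. *)

Lemma subr_eq_l (V : zmodType) (a x : V) : (a - x == a) = (x == 0).
Proof. by rewrite subr_eq -{1}[a]addr0 (inj_eq (addrI a)) eq_sym. Qed.

Section AdditivePoset.

Variables (A : finZmodType) (le : rel A).
Hypothesis hA : additive_poset le.

Lemma ap_refl a : le a a.
Proof. by case: hA => refl _ _ _ _; apply: refl. Qed.

Lemma ap_anti a b : le a b -> le b a -> a = b.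
Proof. by case: hA => _ anti _ _ _ hab hba; apply: anti; rewrite hab hba. Qed.

Lemma ap_trans a b c : le a b -> le b c -> le a c.
Proof. by case: hA => _ _ trans _ _ hab hbc; apply: trans hbc. Qed.

Lemma ap_add a b c : le b a -> le c a -> le (b + c) a.
Proof. by case: hA => _ _ _ addC _; apply: addC. Qed.

Lemma ap_le_add3 a b c : le a b -> le a c -> le a (a + b + c).
Proof. by case: hA => _ _ _ _ add3; apply: add3. Qed.

Lemma ap_mulrn a b k : le b a -> (0 < k)%N -> le (b *+ k) a.
Proof.
move=> ba; case: k => // k _; elim: k => [|k IHk]; first by rewrite mulr1n.
by rewrite mulrS; apply: ap_add.
Qed.

Lemma ap_opp a b : le b a -> le (- b) a.
Proof.
move=> ba; have ob := order_gt0 b.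
have b_order : b *+ #[b]%g = 0 by rewrite -FinRing.zmodXgE expg_order.
have -> : - b = b *+ (#[b]%g.-1 + #[b]%g).
  rewrite mulrnDr b_order addr0; apply/eqP; rewrite eq_sym -subr_eq0 opprK.
  by rewrite -mulrSr prednK // b_order.
by apply: ap_mulrn => //; rewrite addn_gt0 ob orbT.
Qed.

Lemma ap_sub a b c : le b a -> le c a -> le (b - c) a.
Proof. by move=> ba ca; apply: ap_add => //; apply: ap_opp. Qed.

Lemma ap_subr_le a x : le x a -> le (a - x) a.
Proof. by apply: ap_sub; apply: ap_refl. Qed.

Lemma ap_0le a : le 0 a.
Proof. by rewrite -(subrr a); apply: ap_sub; apply: ap_refl. Qed.

Lemma ap_le_opp b : le b (- b).
Proof. by have := ap_opp (ap_refl (- b)); rewrite opprK. Qed.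

Lemma ap_le_addr_sub y a b : le y a -> le y b -> le y (y + (a - b)).
Proof.
by move=> ya yb; rewrite addrA; apply: ap_le_add3 => //; apply: ap_trans (ap_le_opp b).
Qed.

Lemma independent_sym x y : independent le x y -> independent le y x.
Proof.
move=> xy; have := ap_sub (ap_refl (x + y)) xy.
by rewrite [x + y]addrC addrK.
Qed.

Lemma independentD x s t : x + x = 0 ->
  independent le x s -> independent le x t -> independent le x (s + t).
Proof.
rewrite /independent => x2 xs xt; have := ap_le_add3 xs xt.
by rewrite [x + (x + s)]addrA x2 add0r addrCA.
Qed.

Lemma subset_tail a b : le a b -> tail le a \subset tail le b.
Proof. by move=> ab; apply/subsetP => z; rewrite !inE => /ap_trans; apply. Qed.

Lemma proper_tail a b : le a b -> a != b -> tail le a \proper tail le b.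
Proof.
move=> ab nab; apply/properP; split; first exact: subset_tail.
exists b; rewrite !inE ?ap_refl //; apply/negP => /(ap_anti ab) eab.
by rewrite eab eqxx in nab.
Qed.

Lemma atom_addrr x : atom le x -> x + x = 0.
Proof.
case=> nx0 tail_x; have : x + x \in tail le x by rewrite inE ap_add ?ap_refl.
rewrite tail_x !inE => /orP[/eqP // | /eqP xxx].
by move/eqP: xxx; rewrite -subr_eq0 addrK (negPf nx0).
Qed.

Lemma exists_atom_le a : a != 0 -> exists2 x, atom le x & le x a.
Proof.
move=> na0; have Pa : (a != 0) && le a a by rewrite na0 ap_refl.
case: (@arg_minnP _ a (fun b => (b != 0) && le b a) (fun b => #|tail le b|) Pa)
  => x /andP[nx0 xa] xmin.
exists x => //; split => //; apply/setP => y; rewrite !inE.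
apply/idP/idP => [yx|]; last by case/orP => /eqP ->; [exact: ap_0le | exact: ap_refl].
have [-> // | ny0] := eqVneq y 0; apply/orP; right; apply/negPn/negP => nyx.
have := xmin y; rewrite ny0 (ap_trans yx xa) => /(_ isT).
by rewrite leqNgt (proper_card (proper_tail yx nyx)).
Qed.

Lemma atomic_expansion_le a S x : atomic_expansion le a S -> x \in S -> le x a.
Proof.
case=> atomS indepS <- xS; have x2 := atom_addrr (atomS x xS).
have : independent le x (\sum_(y in S | y != x) y).
  apply: (big_ind (independent le x)) => [|s t|y /andP[yS nyx]].
  - by rewrite /independent addr0 ap_refl.
  - exact: independentD.
  - by apply: indepS; rewrite // eq_sym.
by rewrite (bigD1 x xS).
Qed.

Lemma atomic_expansion_set1 x : atom le x -> atomic_expansion le x [set x].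
Proof.
move=> atom_x; split; last by rewrite big_set1.
- by move=> y /set1P ->.
- by move=> y z /set1P -> /set1P ->; rewrite eqxx.
Qed.

Lemma atomic_expansion_setU1 a x S : atom le x -> le x a ->
  atomic_expansion le (a - x) S -> atomic_expansion le a (x |: S).
Proof.
move=> atom_x xa expS; have [nx0 _] := atom_x.
have Sle := atomic_expansion_le expS; case: expS => atomS indepS sumS.
have indep_x y : y \in S -> independent le y x.
  move=> yS; have yax := Sle y yS.
  by have := ap_le_addr_sub (ap_trans yax (ap_subr_le xa)) yax; rewrite subKr.
have xNS : x \notin S.
  apply/negP => /Sle xax; have := ap_add xax (ap_refl (a - x)).
  rewrite addrC subrK => /(ap_anti (ap_subr_le xa)) /eqP.
  by rewrite subr_eq_l (negPf nx0).
split; last by rewrite big_setU1 //= sumS addrC subrK.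
- by move=> y /setU1P[-> | /atomS].
- move=> y z /setU1P[-> | yS] /setU1P[-> | zS] nyz.
  + by rewrite eqxx in nyz.
  + exact/independent_sym/indep_x.
  + exact: indep_x.
  + exact: indepS.
Qed.

Lemma exists_atomic_expansion a : a != 0 -> exists S, atomic_expansion le a S.
Proof.
have [n] := ubnP #|tail le a|; elim: n a => // n IHn a tail_a na0.
have [x atom_x xa] := exists_atom_le a na0.
have [ax0 | nax0] := eqVneq (a - x) 0.
  move/eqP: ax0; rewrite subr_eq0 => /eqP ->.
  by exists [set x]; apply: atomic_expansion_set1.
have [|S expS] := IHn (a - x) _ nax0; last by exists (x |: S); apply: atomic_expansion_setU1.
have nax : a - x != a by rewrite subr_eq_l; case: atom_x.
have shrink := proper_card (proper_tail (ap_subr_le xa) nax).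
exact: leq_trans shrink tail_a.
Qed.

End AdditivePoset.

Theorem theorem6p3 (A : finZmodType) (le : rel A) (hA : additive_poset le)
    (a : A) (ha : a != 0) :
  (exists S : {set A}, atomic_expansion le a S) /\
  (forall S : {set A}, atomic_expansion le a S -> S \subset tail le a).
Proof.
split; first exact: exists_atomic_expansion.
move=> S expS; apply/subsetP => x xS; rewrite inE.
exact: atomic_expansion_le expS xS.
Qed.
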